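(* Let $K$ be a compact scattered space. If a space $X$ is regular and $K$-selective, then every open subspace of $X$ is $K$-selective.
   Context: All spaces are assumed $T_1$. A space is scattered if every nonempty subspace has an isolated point. For spaces $Y$, $X$, a map $\varphi:Y\to\mathcal P(X)\setminus\{\emptyset\}$ is lower semicontinuous (l.s.c.) if $\{y:\varphi(y)\cap U\neq\emptyset\}$ is open in $Y$ for every open $U\subseteq X$; a selection is a map $f:Y\to X$ with $f(y)\in\varphi(y)$ for all $y$. $X$ is $Y$-selective if every l.s.c. map from $Y$ to the nonempty closed subsets of $X$ has a continuous selection. *)

From HB Require Import structures.
From mathcomp Require Import all_boot all_order all_algebra.
From mathcomp Require Import all_classical all_reals all_analysis.
Set Implicit Arguments. Unset Strict Implicit. Unset Printing Implicit Defensive.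
Local Open Scope classical_set_scope.

Definition scattered (K : topologicalType) : Prop :=
  forall A : set K, A !=set0 ->
    exists x, A x /\ exists U : set K, open U /\ U `&` A = [set x].

Definition lsc (Y X : topologicalType) (phi : Y -> set X) : Prop :=
  forall U : set X, open U -> open [set y | phi y `&` U !=set0].

Definition selective (Y X : topologicalType) : Prop :=
  forall phi : Y -> set X,
    (forall y, closed (phi y) /\ phi y !=set0) -> lsc phi ->
    exists f : Y -> X, continuous f /\ forall y, phi y (f y).

From HB Require Import structures.
From mathcomp Require Import all_boot all_order all_algebra.
From mathcomp Require Import all_classical all_reals all_analysis.
From mathcomp Require Import finmap.
Local Open Scope classical_set_scope.

(* Let phi : K -> closed subsets of U be l.s.c.  By regularity each phi y
   meets an open V_y whose closure lies in U; the open sets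
   {z | phi z meets V_y} cover K, so by compactness finitely many V_y have a
   union W that meets every phi z and whose closure still lies in U.  Then
   y |-> closure (phi y `&` W), taken in X, is closed, nonempty and l.s.c.,
   and a continuous selection of it takes values in closure W, hence in U,
   and in phi y because phi y is closed in U. *)

Definition pointed_at {T : topologicalType} (t : T) : Type := T.
HB.instance Definition _ (T : topologicalType) (t : T) :=
  Topological.on (pointed_at t).
HB.instance Definition _ (T : topologicalType) (t : T) :=
  isPointed.Build (pointed_at t) t.

(* The library proves [compact_cover] for pointed spaces only; a nonempty
   compact set provides the base point. *)
Lemma compact_cover_compact {T : topologicalType} {A : set T} :
  compact A -> cover_compact A.
Proof.
have [->|/set0P [a _] cA] := eqVneq A set0.
  by move=> _ I D F _ _; exists fset0.
have cA' : @compact (pointed_at a) A by exact: cA.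
by rewrite compact_cover in cA'; exact: cA'.
Qed.

Lemma closure_bigcup_seq {T : topologicalType} {I : choiceType} (s : seq I)
    (F : I -> set T) :
  closure (\bigcup_(i in [set` s]) F i) = \bigcup_(i in [set` s]) closure (F i).
Proof.
rewrite !bigcup_seq; apply: (big_morph (@closure T)); [exact: closureU|].
exact: closure0.
Qed.

Lemma closure_set_val {X : topologicalType} {U : set X} {A : set (set_type U)}
    {p : set_type U} :
  closure (set_val @` A) (set_val p) -> closure A p.
Proof.
move=> clAp B; rewrite nbhsE => -[_ [[G oG <-] Gp] GB].
have [_ [[q Aq <-] Gq]] := clAp G (open_nbhs_nbhs (conj oG Gp)).
by exists q; split => //; exact: GB.
Qed.

Lemma continuous_set_type_lift {Y X : topologicalType} {U : set X}
    {f : Y -> X} :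
  continuous f -> (forall y, U (f y)) ->
  exists g : Y -> set_type U, continuous g /\ forall y, set_val (g y) = f y.
Proof.
move=> cf fU; exists (fun y => exist _ (f y) (mem_set (fU y))); split => //.
exact: (@continuous_comp_initial _ Y X set_val).
Qed.

Section lower_semicontinuity.
Context {Y X : topologicalType}.
Implicit Types (phi : Y -> set X) (W : set X).

Lemma lsc_image {Z : topologicalType} {f : X -> Z} {phi} :
  continuous f -> lsc phi -> lsc (fun y => f @` phi y).
Proof.
move=> cf lsc_phi G oG.
have -> : [set y | f @` phi y `&` G !=set0] =
          [set y | phi y `&` f @^-1` G !=set0].
  apply/seteqP; split => y; first by move=> [_ [[x phix <-] Gfx]]; exists x.
  by move=> [x [phix Gfx]]; exists (f x); split => //; exists x.
by apply: lsc_phi; exact: open_comp.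
Qed.

Lemma lscI_open {phi W} : open W -> lsc phi -> lsc (fun y => phi y `&` W).
Proof.
move=> oW lsc_phi G oG.
have -> : [set y | phi y `&` W `&` G !=set0] =
          [set y | phi y `&` (W `&` G) !=set0].
  by apply/seteqP; split => y /=; rewrite setIA.
by apply: lsc_phi; exact: openI.
Qed.

Lemma lsc_closure {phi} : lsc phi -> lsc (fun y => closure (phi y)).
Proof.
move=> lsc_phi G oG.
have -> : [set y | closure (phi y) `&` G !=set0] = [set y | phi y `&` G !=set0].
  apply/seteqP; split => y [x [phix Gx]]; last first.
    by exists x; split => //; exact: subset_closure.
  exact: phix _ (open_nbhs_nbhs (conj oG Gx)).
exact: lsc_phi.
Qed.

End lower_semicontinuity.

Lemma regular_open_shrink {X : topologicalType} {U : set X} {x : X} :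
  regular_space X -> open U -> U x ->
  exists V : set X, [/\ open V, V x & closure V `<=` U].
Proof.
move=> regX oU Ux.
have [B nB clBU] := regX x U (open_nbhs_nbhs (conj oU Ux)).
exists B°; split; first exact: open_interior.
  exact: nbhs_singleton (nbhs_interior nB).
exact: subset_trans (closureS (@interior_subset _ _)) clBU.
Qed.

Lemma compact_lsc_shrink {K X : topologicalType} {U : set X}
    {phi : K -> set X} :
  compact [set: K] -> regular_space X -> open U -> lsc phi ->
  (forall y, phi y `&` U !=set0) ->
  exists W : set X,
    [/\ open W, closure W `<=` U & forall y, phi y `&` W !=set0].
Proof.
move=> cK regX oU lsc_phi phiU.
have shrink_at y : exists V : set X,
    [/\ open V, phi y `&` V !=set0 & closure V `<=` U].
  have [x [phix Ux]] := phiU y.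
  have [V [oV Vx clVU]] := regular_open_shrink regX oU Ux.
  by exists V; split=> //; exists x.
have [V Vspec] := choice shrink_at.
pose O y := [set z | phi z `&` V y !=set0].
have [D _ covK] : finite_subset_cover [set: K] O [set: K].
  apply: compact_cover_compact cK _ _ _ _ _ => [y _|z _]; last first.
    by exists z => //; have [] := Vspec z.
  by apply: lsc_phi; have [] := Vspec y.
exists (\bigcup_(i in [set` (D : seq K)]) V i); split.
- by apply: bigcup_open => i _; have [] := Vspec i.
- rewrite closure_bigcup_seq; apply: bigcup_sub => i _.
  by have [] := Vspec i.
- move=> z; have [i Di [x [phix Vix]]] := covK z I.
  by exists x; split => //; exists i.
Qed.

Theorem mainTheorem10 (K X : topologicalType) :
  accessible_space K -> compact [set: K] -> scattered K ->
  accessible_space X -> regular_space X -> selective K X ->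
  forall U : set X, open U -> selective K (set_type U).
Proof.
move=> _ cK _ _ regX selX U oU phi phiP lsc_phi.
pose phiX y := set_val @` phi y.
have lsc_phiX : lsc phiX := lsc_image (@initial_continuous _ X set_val) lsc_phi.
have phiXU y : phiX y `&` U !=set0.
  have [p phip] := (phiP y).2.
  by exists (set_val p); split; [exists p | exact: set_valP].
have [W [oW clWU phiXW]] := compact_lsc_shrink cK regX oU lsc_phiX phiXU.
pose psi y := closure (phiX y `&` W).
have psiP y : closed (psi y) /\ psi y !=set0.
  split; first exact: closed_closure.
  by have [x phiWx] := phiXW y; exists x; exact: subset_closure.
have [f [cf psif]] := selX psi psiP (lsc_closure (lscI_open oW lsc_phiX)).
have fU y : U (f y) by apply/clWU/(closureS (@subIsetr _ _ _)); exact: psif.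
have [g [cg gf]] := continuous_set_type_lift cf fU.
exists g; split => // y; have /closure_id -> := (phiP y).1.
apply: closure_set_val; rewrite gf.
by apply: (closureS (@subIsetl _ (phiX y) W)); exact: psif.
Qed.
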